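(* Let $N\ge1$, $\sigma^2>0$, $P_S,P_R>0$, and for each $n=1,\dots,N$ let $\gamma_n^{sr}>0$, $\gamma_n^{rm}>0$, $\gamma_n^{re}>0$ with $\gamma_n^{rm}>\gamma_n^{re}$. Consider the problem $\mathcal{P}1$ in the variables $(P_n^s,P_n^r,t_n)_{n=1}^N$: maximize $\sum_{n=1}^N \frac12\log_2\!\Big(\frac{1+t_n}{1+P_n^r\gamma_n^{re}/\sigma^2}\Big)$ subject to $t_n\le P_n^s\gamma_n^{sr}/\sigma^2$ for all $n$; $t_n\le P_n^r\gamma_n^{rm}/\sigma^2$ for all $n$; $\sum_n P_n^s\le P_S$; $\sum_n P_n^r\le P_R$; $P_n^s\ge0$, $P_n^r\ge0$ for all $n$; and $P_n^r\gamma_n^{re}\le P_n^s\gamma_n^{sr}$ for all $n$. Then the maximum secure rate is achieved with the source and relay powers on each subcarrier satisfying $$P_n^s\gamma_n^{sr}=P_n^r\gamma_n^{rm},$$ i.e. $\mathcal{P}1$ has a global optimal solution in which this equality holds for every $n=1,\dots,N$.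
   Context: Problem $\mathcal{P}1$ is the power-allocation problem for sum secure rate maximization in an OFDMA downlink with a source, a half-duplex decode-and-forward relay, and mutually untrusted users, after each subcarrier $n$ has been assigned to the user with the best relay-to-user gain $\gamma_n^{rm}$; $\gamma_n^{re}$ is the largest relay-to-user gain among the other users (the equivalent eavesdropper), $\gamma_n^{sr}$ is the source-to-relay gain, $P_n^s,P_n^r$ are the source and relay powers on subcarrier $n$, and $t_n$ is an auxiliary variable representing $\min(P_n^s\gamma_n^{sr},P_n^r\gamma_n^{rm})/\sigma^2$. The secure rate on subcarrier $n$ is $\frac12\log_2\big((1+\min(P_n^s\gamma_n^{sr},P_n^r\gamma_n^{rm})/\sigma^2)/(1+P_n^r\gamma_n^{re}/\sigma^2)\big)$. *)

From Stdlib Require Import Reals.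
Open Scope R_scope.

(* rsum N f = f 0 + f 1 + ... + f (N-1)  (subcarriers indexed 0..N-1) *)
Fixpoint rsum (N : nat) (f : nat -> R) : R :=
  match N with
  | O => 0
  | S k => rsum k f + f k
  end.

Definition log2 (x : R) : R := ln x / ln 2.

Definition P1_objective (N : nat) (s2 : R) (gre : nat -> R)
    (Pr t : nat -> R) : R :=
  rsum N (fun n => / 2 * log2 ((1 + t n) / (1 + Pr n * gre n / s2))).

(* Feasible set of P1 (plus the implicit domain 1 + t_n > 0 of the log). *)
Definition P1_feasible (N : nat) (s2 PS PR : R) (gsr grm gre : nat -> R)
    (Ps Pr t : nat -> R) : Prop :=
  (forall n, (n < N)%nat ->
      t n <= Ps n * gsr n / s2 /\
      t n <= Pr n * grm n / s2 /\
      0 <= Ps n /\ 0 <= Pr n /\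
      Pr n * gre n <= Ps n * gsr n /\
      0 < 1 + t n) /\
  rsum N Ps <= PS /\
  rsum N Pr <= PR.

From Stdlib Require Import Reals Lra Lia.
From mathcomp Require all_boot all_order all_algebra all_classical all_reals
  all_analysis Rstruct Rstruct_topology.
Open Scope R_scope.

(** Replacing the relay power of a feasible point by
    [p_n = min (P_n^r, P_n^s gsr_n / grm_n)] and the source power by
    [p_n grm_n / gsr_n] balances the two hops and respects both budgets; it
    does not decrease the objective, because [1 + t_n <= 1 + p_n grm_n / s2]
    while the eavesdropper term [1 + p_n gre_n / s2] can only shrink.  So P1
    reduces to maximising the continuous function [sum_n secure_rate (p_n)]
    over the compact polytope [p >= 0, sum p <= PR, sum (grm/gsr) p <= PS],
    which attains its maximum; the maximiser, balanced, is optimal for P1.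
    Feasibility of a balanced point ([P^r gre <= P^s gsr]) is where
    [gre < grm] is used. *)

Lemma rsum_le (N : nat) (f g : nat -> R) :
  (forall n, (n < N)%nat -> f n <= g n) -> rsum N f <= rsum N g.
Proof.
  induction N as [|N IH]; intros Hfg; simpl; [lra|].
  apply Rplus_le_compat; [apply IH; intros n Hn|]; apply Hfg; lia.
Qed.

Lemma continuity_pt_ln (x : R) : 0 < x -> continuity_pt ln x.
Proof.
  intros Hx. apply derivable_continuous_pt. exists (/ x). now apply derivable_pt_lim_ln.
Qed.

Lemma log2_le (x y : R) : 0 < x -> x <= y -> log2 x <= log2 y.
Proof.
  intros Hx Hxy. unfold log2.
  assert (Hln2 : 0 < ln 2) by (pose proof ln_lt_2; lra).
  apply Rmult_le_compat_r; [left; now apply Rinv_0_lt_compat|].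
  destruct Hxy as [Hlt|<-]; [left; now apply ln_increasing | lra].
Qed.

Lemma log2_div_le (u u' v v' : R) :
  0 < u -> u <= u' -> 0 < v' -> v' <= v -> log2 (u / v) <= log2 (u' / v').
Proof.
  intros Hu Huu' Hv' Hvv'.
  apply log2_le; [apply Rdiv_lt_0_compat; lra|].
  apply Rmult_le_compat; try lra.
  - left; apply Rinv_0_lt_compat; lra.
  - now apply Rinv_le_contravar.
Qed.

(* The secure rate of a subcarrier with relay power [p] and balanced source
   power, [P^s gsr = p gm], so that [t = p gm / s2]. *)
Definition secure_rate (s2 gm ge p : R) : R :=
  / 2 * log2 ((1 + p * gm / s2) / (1 + p * ge / s2)).

Lemma continuity_pt_secure_rate (s2 gm ge p : R) :
  0 < s2 -> 0 <= gm -> 0 <= ge -> 0 <= p ->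
  continuity_pt (secure_rate s2 gm ge) p.
Proof.
  intros Hs2 Hgm Hge Hp.
  assert (Hps2 : 0 <= p / s2).
  { apply Rmult_le_pos; [assumption | apply Rlt_le, Rinv_pos; assumption]. }
  assert (Hm : 0 < 1 + p * gm / s2) by nra.
  assert (He : 0 < 1 + p * ge / s2) by nra.
  unfold secure_rate, log2. reg.
  - lra.
  - apply continuity_pt_ln, Rdiv_lt_0_compat; assumption.
Qed.

Definition budget_feasible (N : nat) (w : nat -> R) (PS PR : R) (y : nat -> R) : Prop :=
  (forall n, (n < N)%nat -> 0 <= y n) /\
  rsum N y <= PR /\
  rsum N (fun n => w n * y n) <= PS.

(* MathComp is imported only inside this section, so that everywhere else
   [<=], [<] and [+] keep their Stdlib meaning on [R] and [nat]. *)
Section BudgetPolytope.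
Import all_boot all_order all_algebra all_classical all_reals all_analysis.
Import Rstruct Rstruct_topology.
Import Order.TTheory GRing.Theory Num.Theory.
Local Open Scope classical_set_scope.
Local Open Scope ring_scope.

Lemma rsumE N f : rsum N f = \sum_(i < N) f i.
Proof. by elim: N => [|N IH] /=; rewrite ?big_ord0 // big_ord_recr /= IH. Qed.

Variable N : nat.

Lemma sum_coord_continuous_at (F : 'I_N -> R -> R) (v : 'rV[R]_N) :
  (forall i, {for v ord0 i, continuous (F i)}) ->
  {for v, continuous (fun u : 'rV[R]_N => \sum_(i < N) F i (u ord0 i))}.
Proof.
move=> Fc; apply: (@cvg_big R^o _ +%R 0 xpredT add_continuous) => [|i _].
  exact: nbhs_filter.
apply: (@continuous_comp _ _ _ (fun u : 'rV[R]_N => u ord0 i) (F i) v).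
  exact: coord_continuous.
exact: Fc.
Qed.

Lemma sum_coord_closed (F : 'I_N -> R -> R) (b : R) :
  (forall i, continuous (F i)) ->
  closed [set v : 'rV[R]_N | \sum_(i < N) F i (v ord0 i) <= b].
Proof.
move=> Fc; apply: (@preimage_closed _ _
  (fun v : 'rV[R]_N => \sum_(i < N) F i (v ord0 i)) [set x | x <= b]).
  by move=> v _; apply: sum_coord_continuous_at => i; exact: Fc.
exact: closed_le.
Qed.

Lemma rsum_coordE (f : nat -> R -> R) [v : 'rV[R]_N] [y : nat -> R] :
  (forall i : 'I_N, v ord0 i = y i) ->
  rsum N (fun n => f n (y n)) = \sum_(i < N) f i (v ord0 i).
Proof. by move=> vy; rewrite rsumE; apply: eq_bigr => i _; rewrite vy. Qed.

Variables (w : nat -> R) (PS PR : R).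

Definition budget_set : set 'rV[R]_N :=
  [set v | (forall i, 0 <= v ord0 i) /\
           \sum_(i < N) v ord0 i <= PR /\ \sum_(i < N) w i * v ord0 i <= PS].

Lemma budget_setE [v : 'rV[R]_N] [y : nat -> R] :
  (forall i : 'I_N, v ord0 i = y i) -> budget_set v <-> budget_feasible N w PS PR y.
Proof.
move=> vy.
rewrite /budget_feasible (rsum_coordE (fun _ x => x) vy).
rewrite (rsum_coordE (fun n x => w n * x) vy).
split=> [[v0 [vPR vPS]]|[y0 [/RleP yPR /RleP yPS]]]; split.
- by move=> n /ssrnat.ltP nN; apply/RleP; have := v0 (Ordinal nN); rewrite vy.
- by split; apply/RleP.
- by move=> i; rewrite vy; apply/RleP/y0/ssrnat.ltP.
- by [].
Qed.

Lemma budget_set_closed : closed budget_set.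
Proof.
have -> : budget_set = \bigcap_(i in setT) [set v | 0 <= v ord0 i] `&`
    ([set v | \sum_(i < N) (fun x => x) (v ord0 i) <= PR] `&`
     [set v | \sum_(i < N) (fun x => w i * x) (v ord0 i) <= PS]).
  by apply/seteqP; split=> v /= [v0 vP]; split=> // i *; exact: v0.
apply: closedI; last apply: closedI.
- apply: closed_bigI => i _.
  apply: (@preimage_closed _ _ (fun v : 'rV[R]_N => v ord0 i) [set x | 0 <= x]).
    by move=> v _; exact: coord_continuous.
  exact: closed_ge.
- by apply: (sum_coord_closed (fun _ x => x)) => i x; exact: cvg_id.
- by apply: (sum_coord_closed (fun i x => w i * x)) => i; exact: mulrl_continuous.
Qed.

Lemma budget_set_compact : compact budget_set.
Proof.
apply: (subclosed_compact budget_set_closed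
  (rV_compact (fun i => @segment_compact _ 0 PR))).
move=> v [v0 [vPR _]] i /=; rewrite in_itv /= v0 /=.
apply: le_trans vPR; rewrite (bigD1 i) //= lerDl.
by apply: sumr_ge0 => j _; exact: v0.
Qed.

Lemma budget_feasible_max (h : nat -> R -> R) :
  (forall n, lt n N -> forall p, Rle 0 p -> continuity_pt (h n) p) ->
  Rle 0 PS -> Rle 0 PR ->
  exists y, budget_feasible N w PS PR y /\
    forall y', budget_feasible N w PS PR y' ->
      Rle (rsum N (fun n => h n (y' n))) (rsum N (fun n => h n (y n))).
Proof.
move=> hc /RleP PS0 /RleP PR0.
have nonempty : budget_set !=set0.
  exists 0; split; first by move=> i; rewrite mxE.
  by split; rewrite big1 // => i _; rewrite mxE ?mulr0.
have cont : {within budget_set, continuous (fun v => \sum_(i < N) h i (v ord0 i))}.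
  apply: continuous_in_subspaceT => v /set_mem [v0 _].
  apply: (sum_coord_continuous_at (fun i : 'I_N => h i)) => i.
  by apply/continuity_pt_cvg/hc; [apply/ssrnat.ltP | apply/RleP].
have [c /set_mem cB cmax] := EVT_max_rV nonempty budget_set_compact cont.
pose y n := if @insub _ (fun k => (k < N)%N) 'I_N n is Some i then c ord0 i else 0.
have cy (i : 'I_N) : c ord0 i = y i by rewrite /y valK.
exists y; split; first exact: (budget_setE cy).1.
move=> y' y'B.
have ry' (i : 'I_N) : (\row_(j < N) y' j) ord0 i = y' i by rewrite mxE.
apply/RleP; rewrite (rsum_coordE h cy) (rsum_coordE h ry').
by apply: cmax; rewrite inE; exact: (budget_setE ry').2.
Qed.

End BudgetPolytope.

Lemma P1_rate_le_balanced (s2 gs gm ge Ps Pr t : R) :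
  0 < s2 -> 0 < gs -> 0 < gm -> 0 <= ge -> 0 <= Ps -> 0 <= Pr ->
  t <= Ps * gs / s2 -> t <= Pr * gm / s2 -> 0 < 1 + t ->
  / 2 * log2 ((1 + t) / (1 + Pr * ge / s2)) <=
  secure_rate s2 gm ge (Rmin Pr (Ps * gs / gm)).
Proof.
  intros Hs2 Hgs Hgm Hge HPs HPr Hts Htr Ht.
  set (m := Rmin Pr (Ps * gs / gm)).
  assert (Hm0 : 0 <= m).
  { apply Rmin_glb; [assumption|].
    apply Rmult_le_pos; [nra | apply Rlt_le, Rinv_pos; assumption]. }
  assert (Htm : t <= m * gm / s2).
  { unfold m, Rmin. destruct (Rle_dec Pr (Ps * gs / gm)); [assumption|].
    replace (Ps * gs / gm * gm / s2) with (Ps * gs / s2) by (field; lra).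
    assumption. }
  assert (Hme : m * ge / s2 <= Pr * ge / s2).
  { apply Rmult_le_compat_r; [left; now apply Rinv_0_lt_compat|].
    apply Rmult_le_compat_r; [assumption | apply Rmin_l]. }
  assert (Hme0 : 0 <= m * ge / s2).
  { apply Rmult_le_pos; [nra | apply Rlt_le, Rinv_pos; assumption]. }
  unfold secure_rate. apply Rmult_le_compat_l; [lra|].
  apply log2_div_le; lra.
Qed.

Section BalancedPowers.

Variables (N : nat) (s2 PS PR : R) (gsr grm gre : nat -> R).
Hypothesis s2_pos : 0 < s2.
Hypothesis gains_pos :
  forall n, (n < N)%nat -> 0 < gsr n /\ 0 < grm n /\ 0 < gre n /\ gre n < grm n.

Definition source_per_relay (n : nat) : R := grm n / gsr n.

Definition balanced_relay (Ps Pr : nat -> R) (n : nat) : R :=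
  Rmin (Pr n) (Ps n * gsr n / grm n).

Lemma P1_feasible_balanced (y : nat -> R) :
  budget_feasible N source_per_relay PS PR y ->
  P1_feasible N s2 PS PR gsr grm gre
    (fun n => source_per_relay n * y n) y (fun n => y n * grm n / s2).
Proof.
  intros [y_nonneg [y_PR y_PS]]. split; [|split; assumption].
  intros n Hn. destruct (gains_pos n Hn) as (Hsr & Hrm & Hre & Hrem).
  pose proof (y_nonneg n Hn) as Hy.
  assert (Hsrc : source_per_relay n * y n * gsr n = y n * grm n).
  { unfold source_per_relay. field. lra. }
  assert (0 <= source_per_relay n).
  { apply Rlt_le, Rdiv_lt_0_compat; assumption. }
  assert (0 <= y n * grm n / s2).
  { apply Rmult_le_pos; [nra | apply Rlt_le, Rinv_pos; assumption]. }
  rewrite Hsrc. repeat split; try lra; nra.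
Qed.

Lemma budget_feasible_balanced_relay (Ps Pr t : nat -> R) :
  P1_feasible N s2 PS PR gsr grm gre Ps Pr t ->
  budget_feasible N source_per_relay PS PR (balanced_relay Ps Pr).
Proof.
  intros [Hfeas [HPS HPR]]. split; [|split].
  - intros n Hn. destruct (gains_pos n Hn) as (Hsr & Hrm & _).
    destruct (Hfeas n Hn) as (_ & _ & HPs & HPr & _).
    apply Rmin_glb; [assumption|].
    apply Rmult_le_pos; [nra | apply Rlt_le, Rinv_pos; assumption].
  - apply Rle_trans with (rsum N Pr); [|assumption].
    apply rsum_le. intros n _. apply Rmin_l.
  - apply Rle_trans with (rsum N Ps); [|assumption].
    apply rsum_le. intros n Hn. destruct (gains_pos n Hn) as (Hsr & Hrm & _).
    assert (Hw : 0 <= source_per_relay n).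
    { apply Rlt_le, Rdiv_lt_0_compat; assumption. }
    apply Rle_trans with (source_per_relay n * (Ps n * gsr n / grm n)).
    + apply Rmult_le_compat_l; [assumption | apply Rmin_r].
    + right. unfold source_per_relay. field. lra.
Qed.

Lemma P1_objective_le_balanced (Ps Pr t : nat -> R) :
  P1_feasible N s2 PS PR gsr grm gre Ps Pr t ->
  P1_objective N s2 gre Pr t <=
  rsum N (fun n => secure_rate s2 (grm n) (gre n) (balanced_relay Ps Pr n)).
Proof.
  intros [Hfeas _]. apply rsum_le. intros n Hn.
  destruct (gains_pos n Hn) as (Hsr & Hrm & Hre & _).
  destruct (Hfeas n Hn) as (Hts & Htr & HPs & HPr & _ & Ht).
  apply P1_rate_le_balanced; lra.
Qed.

End BalancedPowers.

Theorem theorem1 (N : nat) (s2 PS PR : R) (gsr grm gre : nat -> R) :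
  (1 <= N)%nat -> 0 < s2 -> 0 < PS -> 0 < PR ->
  (forall n, (n < N)%nat ->
     0 < gsr n /\ 0 < grm n /\ 0 < gre n /\ gre n < grm n) ->
  exists Ps Pr t : nat -> R,
    P1_feasible N s2 PS PR gsr grm gre Ps Pr t /\
    (forall Ps' Pr' t' : nat -> R,
        P1_feasible N s2 PS PR gsr grm gre Ps' Pr' t' ->
        P1_objective N s2 gre Pr' t' <= P1_objective N s2 gre Pr t) /\
    (forall n, (n < N)%nat -> Ps n * gsr n = Pr n * grm n).
Proof.
  intros _ Hs2 HPS HPR gains_pos.
  destruct (budget_feasible_max N (source_per_relay gsr grm) PS PR
              (fun n => secure_rate s2 (grm n) (gre n))) as [y [Hy Hmax]];
    [| lra | lra |].
  { intros n Hn p Hp. destruct (gains_pos n Hn) as (_ & Hrm & Hre & _).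
    apply continuity_pt_secure_rate; lra. }
  exists (fun n => source_per_relay gsr grm n * y n), y, (fun n => y n * grm n / s2).
  split; [|split].
  - now apply P1_feasible_balanced.
  - intros Ps' Pr' t' Hfeas.
    eapply Rle_trans; [eapply P1_objective_le_balanced; eassumption|].
    apply Hmax. eapply budget_feasible_balanced_relay; eassumption.
  - intros n Hn. destruct (gains_pos n Hn) as (Hsr & _).
    unfold source_per_relay. field. lra.
Qed.
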